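(* Let $f:\mathbb{R}^d\times\mathcal{X}\to\mathbb{R}$ be differentiable in $\theta$, with $\mathcal{X}$ a subset of a Euclidean space and $\sup_{x\in\mathcal{X}}\Vert x\Vert\le D<\infty$. Assume (A1): there are $K_1,K_2>0$ with $\Vert\nabla f(\theta,x)-\nabla f(\hat\theta,\hat x)\Vert\le K_1\Vert\theta-\hat\theta\Vert+K_2\Vert x-\hat x\Vert(\Vert\theta\Vert+\Vert\hat\theta\Vert+1)$ for all $\theta,\hat\theta\in\mathbb{R}^d$, $x,\hat x\in\mathcal{X}$; (A3): there are $m>0$, $K>0$ with $\langle\nabla f(\theta_1,x)-\nabla f(\theta_2,x),\theta_1-\theta_2\rangle\ge m\Vert\theta_1-\theta_2\Vert^2-K$ for all $\theta_1,\theta_2,x$; (N): $(\xi_k)_{k\ge1}$ are i.i.d. random vectors in $\mathbb{R}^d$, independent of the minibatches, with a continuous everywhere-positive density, $\mathbb{E}\xi_1=0$ and $\sigma^2:=\mathbb{E}\Vert\xi_1\Vert^2<\infty$. Let $\hat x_1,\dots,\hat x_n\in\mathcal{X}$, $b\in\{1,\dots,n\}$, $(\Omega_k)$ i.i.d. uniformly random $b$-subsets of $\{1,\dots,n\}$, and let $\hat P$ be the transition kernel of $\hat\theta_k=\hat\theta_{k-1}-\frac\eta b\sum_{i\in\Omega_k}\nabla f(\hat\theta_{k-1},\hat x_i)+\eta\xi_k$. Let $\hat\theta_*$ be a minimizer of $\frac1n\sum_{i=1}^nf(\theta,\hat x_i)$ and $\hat V(\theta):=1+\Vert\theta-\hat\theta_*\Vert^2$.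 If $\eta<\min\left\{\frac1m,\frac{m}{K_1^2+64D^2K_2^2}\right\}$, then for all $\theta\in\mathbb{R}^d$, $$(\hat P\hat V)(\theta)\le(1-m\eta)\hat V(\theta)+2m\eta-\eta^2K_1^2-56\eta^2D^2K_2^2+64\eta^2D^2K_2^2\Vert\hat\theta_*\Vert^2+2\eta K+\eta^2\sigma^2.$$
   Context: $(\hat P\hat V)(\theta)=\mathbb{E}[\hat V(\hat\theta_1)\mid\hat\theta_0=\theta]$. *)

From HB Require Import structures.
From mathcomp Require Import all_boot all_order all_algebra.
From mathcomp Require Import all_classical all_reals all_analysis.
Set Implicit Arguments. Unset Strict Implicit. Unset Printing Implicit Defensive.
Import Order.TTheory GRing.Theory Num.Theory.
Import numFieldNormedType.Exports.
Local Open Scope classical_set_scope.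
Local Open Scope ring_scope.

Definition edot (R : realType) (d : nat) (u v : 'rV[R]_d) : R :=
  \sum_(i < d) u ord0 i * v ord0 i.
Definition enorm (R : realType) (d : nat) (u : 'rV[R]_d) : R :=
  Num.sqrt (edot u u).

Definition grad (R : realType) (d : nat) (g : 'rV[R]_d -> R) (t : 'rV[R]_d)
  : 'rV[R]_d := \row_(i < d) ('D_(delta_mx ord0 i) g t).

(* Iterated Lebesgue integral over R^k of a function of k real coordinates
   (the coordinates are passed as a list, first coordinate first). *)
Fixpoint iter_lint (R : realType) (k : nat) (g : seq R -> \bar R) : \bar R :=
  match k with
  | 0 => g [::]
  | k'.+1 => (\int[@lebesgue_measure R]_x iter_lint k' (fun s => g (x :: s)))%E
  end.

Definition row_of_seq (R : realType) (d : nat) (s : seq R) : 'rV[R]_d :=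
  \row_(i < d) nth 0 s i.

Definition box (R : realType) (d : nat) (a c : 'rV[R]_d) : set 'rV[R]_d :=
  [set v | forall i : 'I_d, a ord0 i < v ord0 i <= c ord0 i].

(* The random vector xi : T -> R^d has density p w.r.t. Lebesgue measure on
   R^d: its law agrees with p(x) dx on all boxes (which generate the Borel
   sigma-algebra of R^d). *)
Definition has_density (R : realType) (dT : measure_display)
  (T : measurableType dT) (P : probability T R) (d : nat)
  (xi : T -> 'rV[R]_d) (p : 'rV[R]_d -> R) : Prop :=
  forall a c : 'rV[R]_d,
    P (xi @^-1` box a c) =
    iter_lint d (fun s => ((\1_(box a c) (row_of_seq d s) : R)
                           * p (row_of_seq d s))%:E).

Definition sgld_step (R : realType) (d p n : nat)
  (f : 'rV[R]_d -> 'rV[R]_p -> R) (xh : 'I_n -> 'rV[R]_p) (b : nat) (eta : R)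
  (S : {set 'I_n}) (z : 'rV[R]_d) (theta : 'rV[R]_d) : 'rV[R]_d :=
  theta - (eta / b%:R) *: (\sum_(i in S) grad (fun t => f t (xh i)) theta)
        + eta *: z.

(* Transition kernel applied to V:
   (P V)(theta) = E[ V(theta_1) | theta_0 = theta ], where the minibatch
   Omega_1 is uniform over the b-subsets of {1..n} and independent of the
   noise xi_1 (whose law is that of xi under P). *)
Definition kernel_apply (R : realType) (dT : measure_display)
  (T : measurableType dT) (P : probability T R) (d p n : nat)
  (f : 'rV[R]_d -> 'rV[R]_p -> R) (xh : 'I_n -> 'rV[R]_p) (b : nat) (eta : R)
  (xi : T -> 'rV[R]_d) (V : 'rV[R]_d -> R) (theta : 'rV[R]_d) : \bar R :=
  ((#|[set S : {set 'I_n} | #|S| == b]|%:R : R)^-1%:E *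
   \sum_(S : {set 'I_n} | #|S| == b)
      \int[P]_w (V (sgld_step f xh b eta S (xi w) theta))%:E)%E.

(* Write u = theta - thstar, g_S for the minibatch gradient and G for the full
   gradient at theta. The noise is centred, so it contributes exactly
   eta^2 sigma^2 and leaves 1 + E_S |u - eta g_S|^2. Since
   |g_S|^2 = |g_S - G|^2 + 2 <g_S, G> - |G|^2, the square |u - eta g_S|^2 is
   bounded by an affine function of g_S plus eta^2 C^2, where C bounds the
   spread of the per-sample gradients ((A1) with |x| <= D); a uniform b-subset
   contains each index with probability b / n, so g_S averages to G and the
   bound becomes |u|^2 - 2 eta <G, u> + eta^2 (|G|^2 + C^2). The full gradient
   vanishes at the minimizer thstar, hence (A1) and (A3) give |G| <= K1 |u| and
   <G, u> >= m |u|^2 - K, and the step-size condition absorbs the rest. *)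

From HB Require Import structures.
From mathcomp Require Import all_boot all_order all_algebra perm.
From mathcomp Require Import all_classical all_reals all_analysis.
From mathcomp Require Import ring lra.
Import Order.TTheory GRing.Theory Num.Theory.
Import numFieldNormedType.Exports.
Local Open Scope classical_set_scope.
Local Open Scope ring_scope.
Set Implicit Arguments.
Unset Strict Implicit.

Section Mean.
Variable R : numFieldType.

Lemma mean_le (I : finType) (A : {pred I}) (F : I -> R) (C : R) :
  (0 < #|A|)%N -> (forall i, i \in A -> F i <= C) ->
  (#|A|%:R)^-1 * \sum_(i in A) F i <= C.
Proof.
move=> A_gt0 FC; rewrite ler_pdivrMl ?ltr0n //.
by apply: le_trans (ler_sum _ FC) _; rewrite sumr_const mulr_natl.
Qed.

Lemma mean_ge (I : finType) (A : {pred I}) (F : I -> R) (C : R) :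
  (0 < #|A|)%N -> (forall i, i \in A -> C <= F i) ->
  C <= (#|A|%:R)^-1 * \sum_(i in A) F i.
Proof.
move=> A_gt0 CF; rewrite ler_pdivlMl ?ltr0n //.
by apply: le_trans _ (ler_sum _ CF); rewrite sumr_const mulr_natl.
Qed.

End Mean.

Section Euclidean.
Variables (R : realType) (d : nat).
Implicit Types u v w : 'rV[R]_d.

Lemma edotC u v : edot u v = edot v u.
Proof. by apply: eq_bigr => i _; rewrite mulrC. Qed.

Lemma edotDl u v w : edot (u + v) w = edot u w + edot v w.
Proof. by rewrite /edot -big_split; apply: eq_bigr => i _; rewrite mxE mulrDl. Qed.

Lemma edotZl k u w : edot (k *: u) w = k * edot u w.
Proof. by rewrite /edot mulr_sumr; apply: eq_bigr => i _; rewrite mxE mulrA. Qed.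

Lemma edotBl u v w : edot (u - v) w = edot u w - edot v w.
Proof. by rewrite edotDl -scaleN1r edotZl mulN1r. Qed.

Lemma edot0l w : edot 0 w = 0.
Proof. by rewrite -(scale0r 0) edotZl mul0r. Qed.

Lemma edotDr u v w : edot w (u + v) = edot w u + edot w v.
Proof. by rewrite !(edotC w) edotDl. Qed.

Lemma edotZr k u w : edot w (k *: u) = k * edot w u.
Proof. by rewrite !(edotC w) edotZl. Qed.

Lemma edotBr u v w : edot w (u - v) = edot w u - edot w v.
Proof. by rewrite !(edotC w) edotBl. Qed.

Lemma edot_suml (I : Type) (r : seq I) (P : pred I) (F : I -> 'rV[R]_d) w :
  edot (\sum_(i <- r | P i) F i) w = \sum_(i <- r | P i) edot (F i) w.
Proof. exact: (big_morph (fun u => edot u w) (fun x y => edotDl x y w) (edot0l w)). Qed.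

Lemma edotxx_ge0 u : 0 <= edot u u.
Proof. by apply: sumr_ge0 => i _; rewrite -expr2 sqr_ge0. Qed.

Lemma edotxx_eq0 u v : edot u u = 0 -> edot u v = 0.
Proof.
move=> /eqP; rewrite psumr_eq0 => [/allP u0|i _]; last by rewrite -expr2 sqr_ge0.
rewrite /edot big1 // => i _.
by have := u0 i (mem_index_enum _); rewrite mulf_eq0 orbb => /eqP ->; rewrite mul0r.
Qed.

Lemma enorm_ge0 u : 0 <= enorm u.
Proof. exact: sqrtr_ge0. Qed.

Lemma sqr_enorm u : enorm u ^+ 2 = edot u u.
Proof. by rewrite sqr_sqrtr // edotxx_ge0. Qed.

Lemma enorm0 : enorm (0 : 'rV[R]_d) = 0.
Proof. by rewrite /enorm edot0l sqrtr0. Qed.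

Lemma enormZ k u : enorm (k *: u) = `|k| * enorm u.
Proof. by rewrite /enorm edotZl edotZr mulrA -expr2 sqrtrM ?sqr_ge0 // sqrtr_sqr. Qed.

Lemma enormN u : enorm (- u) = enorm u.
Proof. by rewrite -scaleN1r enormZ normrN1 mul1r. Qed.

Lemma enormB u v : enorm (u - v) = enorm (v - u).
Proof. by rewrite -enormN opprB. Qed.

Lemma edot_le_enorm u v : edot u v <= enorm u * enorm v.
Proof.
set a := enorm u; set c := enorm v.
have [a0 c0] : 0 <= a /\ 0 <= c by split; apply: enorm_ge0.
have := edotxx_ge0 (c *: u - a *: v).
rewrite !(edotBl, edotBr, edotZl, edotZr) -!sqr_enorm -/a -/c (edotC v u) => H.
have [ac0|ac_neq0] := eqVneq (a * c) 0.
  move: ac0 => /eqP; rewrite mulf_eq0 => /orP[]/eqP x0.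
    by rewrite edotxx_eq0 -?sqr_enorm -/a x0 ?expr0n ?mul0r.
  by rewrite edotC edotxx_eq0 -?sqr_enorm -/c x0 ?expr0n ?mulr0.
have ac_gt0 : 0 < a * c by rewrite lt_def ac_neq0 mulr_ge0.
have : 0 <= (a * c) * (a * c - edot u v) by nra.
by rewrite pmulr_rge0 // subr_ge0.
Qed.

Lemma enormD u v : enorm (u + v) <= enorm u + enorm v.
Proof.
rewrite -(ger0_norm (addr_ge0 (enorm_ge0 u) (enorm_ge0 v))) -sqrtr_sqr ler_sqrt ?sqr_ge0 //.
rewrite edotDl !edotDr (edotC v u) -!sqr_enorm.
by have := edot_le_enorm u v; nra.
Qed.

Lemma enorm_sum (I : finType) (A : {pred I}) (F : I -> 'rV[R]_d) :
  enorm (\sum_(i in A) F i) <= \sum_(i in A) enorm (F i).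
Proof.
elim/big_rec2: _ => [|i y1 y2 _ IH]; first by rewrite enorm0.
exact: le_trans (enormD _ _) (lerD _ IH).
Qed.

Lemma enorm_mean_le (I : finType) (A : {pred I}) (F : I -> 'rV[R]_d) (C : R) :
  (0 < #|A|)%N -> (forall i, i \in A -> enorm (F i) <= C) ->
  enorm ((#|A|%:R)^-1 *: \sum_(i in A) F i) <= C.
Proof.
move=> A_gt0 FC; rewrite enormZ ger0_norm ?invr_ge0 //.
apply: le_trans (mean_le A_gt0 FC).
by rewrite ler_wpM2l ?invr_ge0 // enorm_sum.
Qed.

Lemma enorm_mean_sub_le (I : finType) (A : {pred I}) (F : I -> 'rV[R]_d) v (C : R) :
  (0 < #|A|)%N -> (forall i, i \in A -> enorm (F i - v) <= C) ->
  enorm ((#|A|%:R)^-1 *: \sum_(i in A) F i - v) <= C.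
Proof.
move=> A_gt0 FC.
suff -> : (#|A|%:R)^-1 *: \sum_(i in A) F i - v = (#|A|%:R)^-1 *: \sum_(i in A) (F i - v).
  exact: enorm_mean_le.
rewrite sumrB sumr_const -[v *+ _]scaler_nat scalerBr scalerA mulVf ?scale1r //.
by rewrite pnatr_eq0 -lt0n.
Qed.

(* Affine in [g]: this is what lets the minibatch average pass inside. *)
Lemma sqr_enorm_step_le u g G (eta C : R) : enorm (g - G) <= C ->
  enorm (u - eta *: g) ^+ 2
  <= enorm u ^+ 2 + eta ^+ 2 * (C ^+ 2 - enorm G ^+ 2)
     + edot g (2 * eta ^+ 2 *: G - 2 * eta *: u).
Proof.
move=> gGC; have C_ge0 := le_trans (enorm_ge0 _) gGC.
have := ler_wpM2l (sqr_ge0 eta) (lerXn2r 2 (enorm_ge0 _) C_ge0 gGC).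
rewrite !sqr_enorm !(edotBl, edotBr, edotZl, edotZr) (edotC G g) (edotC u g).
nra.
Qed.

End Euclidean.

Lemma draws_mem_count_sym (n b : nat) (i j : 'I_n) :
  (\sum_(S : {set 'I_n} | #|S| == b) (i \in S))%N =
  (\sum_(S : {set 'I_n} | #|S| == b) (j \in S))%N.
Proof.
pose swap (S : {set 'I_n}) := (tperm i j @: S)%SET.
have swapK : involutive swap.
  move=> S; rewrite /swap -imset_comp (eq_imset (g := id)) ?imset_id //.
  exact: tpermK.
rewrite (reindex_inj (inv_inj swapK)) /=.
apply: eq_big => S; first by rewrite card_imset //; exact: perm_inj.
by move=> _; rewrite -{1}(tpermR i j) mem_imset //; exact: perm_inj.
Qed.

Lemma draws_mem_count (n b : nat) (i : 'I_n) :
  (n * \sum_(S : {set 'I_n} | #|S| == b) (i \in S) = b * 'C(n, b))%N.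
Proof.
transitivity (\sum_(j < n) \sum_(S : {set 'I_n} | #|S| == b) (j \in S))%N.
  by rewrite (eq_bigr _ (fun j _ => draws_mem_count_sym b j i)) sum_nat_const card_ord.
rewrite exchange_big /= mulnC -[n in 'C(n, _)]card_ord -card_draws -sum_nat_const.
apply: eq_big => S; first by rewrite inE.
move=> /eqP <-; rewrite -sum1_card [RHS]big_mkcond /=.
by apply: eq_bigr => j _; case: (j \in S).
Qed.

Section BatchMean.
Variables (R : numFieldType) (n b : nat).

Definition batch_mean (F : {set 'I_n} -> R) : R :=
  (#|[set S : {set 'I_n} | #|S| == b]|%:R)^-1 *
  \sum_(S : {set 'I_n} | #|S| == b) F S.

Lemma batch_mean_le (F G : {set 'I_n} -> R) :
  (forall S : {set 'I_n}, #|S| = b -> F S <= G S) -> batch_mean F <= batch_mean G.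
Proof.
move=> FG; rewrite ler_wpM2l ?invr_ge0 //.
by apply: ler_sum => S /eqP /FG.
Qed.

Hypothesis b_le_n : (b <= n)%N.

(* Here [[set S | _]] is a classical set, as in [kernel_apply]. *)
Lemma card_batches : #|[set S : {set 'I_n} | #|S| == b]| = 'C(n, b).
Proof.
rewrite -[n in 'C(n, _)]card_ord -card_draws; apply: eq_card => S.
by rewrite inE; apply/idP/idP; rewrite in_setE.
Qed.

Lemma card_batches_gt0 : (0 < #|[set S : {set 'I_n} | #|S| == b]|)%N.
Proof. by rewrite card_batches bin_gt0. Qed.

Lemma batch_meanDl (c : R) (F : {set 'I_n} -> R) :
  batch_mean (fun S => c + F S) = c + batch_mean F.
Proof.
rewrite /batch_mean big_split sumr_const mulrDr; congr (_ + _).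
rewrite card_batches (_ : #|_| = 'C(n, b)); last first.
  by rewrite -[n in 'C(n, _)]card_ord -card_draws; apply: eq_card => S; rewrite inE.
by rewrite -[c *+ _]mulr_natl mulrA mulVf ?mul1r // pnatr_eq0 -lt0n bin_gt0.
Qed.

Lemma batch_mean_mean (phi : 'I_n -> R) : (0 < b)%N ->
  batch_mean (fun S => (b%:R)^-1 * \sum_(i in S) phi i)
  = (n%:R)^-1 * \sum_i phi i.
Proof.
move=> b_gt0; have n_gt0 : (0 < n)%N := leq_trans b_gt0 b_le_n.
have count i : (\sum_(S : {set 'I_n} | #|S| == b) (i \in S))%:R
               = (b%:R * #|[set S : {set 'I_n} | #|S| == b]|%:R) / n%:R :> R.
  by rewrite -natrM card_batches -(draws_mem_count b i) natrM mulrC mulKf // pnatr_eq0 -lt0n.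
rewrite /batch_mean -mulr_sumr.
rewrite (eq_bigr (fun S : {set 'I_n} => \sum_i (i \in S)%:R * phi i)); last first.
  move=> S _; rewrite [LHS]big_mkcond; apply: eq_bigr => i _.
  by case: (i \in S); rewrite ?mul1r ?mul0r.
rewrite exchange_big /=.
rewrite (eq_bigr (fun i => (\sum_(S : {set 'I_n} | #|S| == b) (i \in S))%:R * phi i));
  last by move=> i _; rewrite natr_sum mulr_suml.
under eq_bigr do rewrite count.
rewrite -mulr_sumr; field.
by rewrite !pnatr_eq0 -!lt0n b_gt0 n_gt0 card_batches_gt0.
Qed.

End BatchMean.

Lemma batch_mean_sqr_enorm_step_le (R : realType) (d n b : nat)
    (g : 'I_n -> 'rV[R]_d) (u : 'rV[R]_d) (eta C : R) :
  (0 < b <= n)%N -> (forall i j, enorm (g i - g j) <= C) ->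
  let G := (n%:R)^-1 *: \sum_i g i in
  batch_mean b (fun S => enorm (u - eta *: ((b%:R)^-1 *: \sum_(i in S) g i)) ^+ 2)
  <= enorm u ^+ 2 - 2 * eta * edot G u + eta ^+ 2 * (enorm G ^+ 2 + C ^+ 2).
Proof.
move=> /andP[b_gt0 b_le_n] gC; cbv zeta; set G := _ *: \sum_i g i.
have n_gt0 := leq_trans b_gt0 b_le_n.
set w := 2 * eta ^+ 2 *: G - 2 * eta *: u.
have gGC i : enorm (g i - G) <= C.
  rewrite enormB; have := @enorm_mean_sub_le _ _ 'I_n predT g (g i) C.
  by rewrite card_ord; apply => // j _; exact: gC.
have step (S : {set 'I_n}) : #|S| = b ->
    enorm (u - eta *: ((b%:R)^-1 *: \sum_(i in S) g i)) ^+ 2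
    <= (enorm u ^+ 2 + eta ^+ 2 * (C ^+ 2 - enorm G ^+ 2))
       + (b%:R)^-1 * \sum_(i in S) edot (g i) w.
  move=> Sb; rewrite -edot_suml -edotZl.
  apply: sqr_enorm_step_le.
  by have := @enorm_mean_sub_le _ _ _ S g G C; rewrite Sb; apply.
apply: le_trans (batch_mean_le step) _.
rewrite batch_meanDl // batch_mean_mean //.
have -> : (n%:R)^-1 * \sum_i edot (g i) w = edot G w by rewrite edotZl edot_suml.
rewrite /w edotBr (edotZr _ G) (edotZr _ u) -sqr_enorm.
lra.
Qed.

Lemma derive_eq0_at_min (R : realFieldType) (V : normedModType R) (F : V -> R) (a v : V) :
  (forall x, derivable F x v) -> (forall x, F a <= F x) -> 'D_v F a = 0.
Proof.
move=> Fd Fmin; pose h (t : R) := F (t *: v + a).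
have hE t : (fun e : R => e^-1 *: ((h \o shift t) (e *: 1) - h t)) =
            (fun e : R => e^-1 *: ((F \o shift (t *: v + a)) (e *: v) - F (t *: v + a))).
  apply: funext => e; rewrite /h /= scalerDl addrA.
  by congr (_ *: (F (_ *: _ + _ + _) - _)); rewrite /GRing.scale /= mulr1.
have hd t : derivable h t 1 by rewrite /derivable hE; exact: Fd.
have <- : 'D_1 h 0 = 'D_v F a by rewrite /derive hE scale0r add0r.
have h0_min : is_derive (0 : R) (1 : R) h (0 : R).
  apply: (@derive1_at_min R h (-1) 1 0) => [|t _||t _].
  - by rewrite (le_trans (lerN10 _)) ?ler01.
  - exact: hd t.
  - by rewrite in_itv /= ltrN10 ltr01.
  - by rewrite /h scale0r add0r.
exact: derive_val.
Qed.

Lemma grad_sum_eq0_at_min (R : realType) (d n : nat) (F : 'I_n -> 'rV[R]_d -> R)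
    (a : 'rV[R]_d) :
  (forall i t, differentiable (F i) t) ->
  (forall t, \sum_i F i a <= \sum_i F i t) ->
  \sum_i grad (F i) a = 0.
Proof.
move=> Fdiff Fmin; apply/rowP => j; rewrite summxE !mxE.
under eq_bigr do rewrite mxE.
rewrite -derive_sum; last by move=> i; exact: diff_derivable.
apply: derive_eq0_at_min => [x|x]; first by apply: derivable_sum => i; exact: diff_derivable.
by rewrite !fct_sumE; exact: Fmin.
Qed.

Lemma integral_sqr_enorm_add_centered (R : realType) (dT : measure_display)
    (T : measurableType dT) (P : probability T R) (d : nat) (xi : T -> 'rV[R]_d)
    (c eta : R) (a : 'rV[R]_d) :
  (forall i : 'I_d, P.-integrable setT (fun w => (xi w ord0 i)%:E)) ->
  (forall i : 'I_d, (\int[P]_w (xi w ord0 i)%:E = 0)%E) ->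
  P.-integrable setT (fun w => (enorm (xi w) ^+ 2)%:E) ->
  (\int[P]_w (c + enorm (a + eta *: xi w) ^+ 2)%:E =
   (c + enorm a ^+ 2 + eta ^+ 2 * fine (\int[P]_w (enorm (xi w) ^+ 2)%:E))%:E)%E.
Proof.
move=> xi_int xi_mean xi2_int.
have expand w : (c + enorm (a + eta *: xi w) ^+ 2)%:E =
    ((c + enorm a ^+ 2)%:E
     + \sum_(i < d) (2 * eta * a ord0 i)%:E * (xi w ord0 i)%:E
     + (eta ^+ 2)%:E * (enorm (xi w) ^+ 2)%:E)%E.
  under eq_bigr do rewrite -EFinM.
  rewrite sumEFin -!EFinM -!EFinD; congr (_%:E).
  have -> : \sum_(i < d) 2 * eta * a ord0 i * xi w ord0 i = 2 * eta * edot a (xi w).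
    by rewrite /edot mulr_sumr; apply: eq_bigr => i _; rewrite mulrA.
  rewrite !sqr_enorm edotDr !edotDl !edotZl !edotZr (edotC (xi w) a).
  ring.
have lin_int : P.-integrable setT
    (fun w => \sum_(i < d) (2 * eta * a ord0 i)%:E * (xi w ord0 i)%:E)%E.
  by apply: integrable_sum => // i _; exact: integrableZl.
have sq_int : P.-integrable setT (fun w => (eta ^+ 2)%:E * (enorm (xi w) ^+ 2)%:E)%E.
  exact: integrableZl.
have cst_int : P.-integrable setT (cst (c + enorm a ^+ 2)%:E).
  exact: finite_measure_integrable_cst.
under eq_integral do rewrite expand.
rewrite integralD //; last exact: integrableD.
rewrite integralD // integral_cst //.
rewrite [X in (_ * X + _ + _)%E](_ : _ = 1%E) ?mule1; last exact: probability_setT.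
rewrite integral_sum //; last by move=> i; exact: integrableZl.
under eq_bigr do rewrite integralZl // xi_mean mule0.
rewrite big1_eq adde0 integralZl //.
by rewrite -{1}(fineK (integrable_fin_num measurableT xi2_int)) -EFinM -EFinD.
Qed.

Lemma kernel_apply_sqr_dist (R : realType) (dT : measure_display)
    (T : measurableType dT) (P : probability T R) (d p n b : nat)
    (f : 'rV[R]_d -> 'rV[R]_p -> R) (xh : 'I_n -> 'rV[R]_p) (eta : R)
    (xi : T -> 'rV[R]_d) (ts theta : 'rV[R]_d) :
  (b <= n)%N ->
  (forall i : 'I_d, P.-integrable setT (fun w => (xi w ord0 i)%:E)) ->
  (forall i : 'I_d, (\int[P]_w (xi w ord0 i)%:E = 0)%E) ->
  P.-integrable setT (fun w => (enorm (xi w) ^+ 2)%:E) ->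
  kernel_apply P f xh b eta xi (fun t => 1 + enorm (t - ts) ^+ 2) theta
  = (1 + eta ^+ 2 * fine (\int[P]_w (enorm (xi w) ^+ 2)%:E)
     + batch_mean b (fun S => enorm (theta - ts - eta *:
         ((b%:R)^-1 *: \sum_(i in S) grad (fun s => f s (xh i)) theta)) ^+ 2))%:E.
Proof.
move=> b_le_n xi_int xi_mean xi2_int.
set F := fun S : {set 'I_n} => _; set c := 1 + _.
have noise S : (\int[P]_w
    (1 + enorm (sgld_step f xh b eta S (xi w) theta - ts) ^+ 2)%:E = (c + F S)%:E)%E.
  rewrite /c addrAC -integral_sqr_enorm_add_centered //; apply: eq_integral => w _.
  by rewrite /sgld_step /F scalerA addrAC [theta - _ - ts]addrAC.
rewrite /kernel_apply (eq_bigr _ (fun S _ => noise S)) sumEFin -EFinM.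
by congr (_%:E); exact: batch_meanDl.
Qed.

Section GradientBounds.
Variables (R : realType) (d p n : nat) (X : set 'rV[R]_p) (D K1 K2 m K : R).
Variables (f : 'rV[R]_d -> 'rV[R]_p -> R) (xh : 'I_n -> 'rV[R]_p).
Hypothesis xh_in : forall i, X (xh i).

Local Notation g i t := (grad (fun s => f s (xh i)) t).

Definition full_grad (t : 'rV[R]_d) := (n%:R)^-1 *: \sum_i g i t.

Hypothesis X_bounded : forall x, X x -> enorm x <= D.
Hypothesis K2_ge0 : 0 <= K2.
Hypothesis grad_lipschitz : forall t th x xx, X x -> X xx ->
  enorm (grad (fun s => f s x) t - grad (fun s => f s xx) th)
  <= K1 * enorm (t - th) + K2 * enorm (x - xx) * (enorm t + enorm th + 1).

Lemma grad_spread_le t i j : enorm (g i t - g j t) <= 2 * D * K2 * (2 * enorm t + 1).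
Proof.
apply: le_trans (grad_lipschitz t t (xh_in i) (xh_in j)) _.
have -> : 2 * D * K2 * (2 * enorm t + 1) = K2 * (D + D) * (enorm t + enorm t + 1).
  by ring.
rewrite subrr enorm0 mulr0 add0r ler_wpM2r ?addr_ge0 ?enorm_ge0 // ler_wpM2l //.
by apply: le_trans (enormD _ _) _; rewrite enormN lerD ?X_bounded.
Qed.

Hypothesis grad_dissipative : forall t1 t2 x, X x ->
  m * enorm (t1 - t2) ^+ 2 - K
  <= edot (grad (fun s => f s x) t1 - grad (fun s => f s x) t2) (t1 - t2).

Variable ts : 'rV[R]_d.
Hypothesis n_gt0 : (0 < n)%N.
Hypothesis grad_ts : \sum_i g i ts = 0.

Lemma full_gradE t : full_grad t = (n%:R)^-1 *: \sum_i (g i t - g i ts).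
Proof. by rewrite sumrB grad_ts subr0. Qed.

Lemma enorm_full_grad_le t : enorm (full_grad t) <= K1 * enorm (t - ts).
Proof.
rewrite full_gradE; have := @enorm_mean_le _ _ 'I_n predT (fun i => g i t - g i ts).
rewrite card_ord; apply => // i _.
have := grad_lipschitz t ts (xh_in i) (xh_in i).
by rewrite subrr enorm0 mulr0 mul0r addr0.
Qed.

Lemma full_grad_dissipative t :
  m * enorm (t - ts) ^+ 2 - K <= edot (full_grad t) (t - ts).
Proof.
rewrite full_gradE edotZl edot_suml.
have := @mean_ge _ 'I_n predT (fun i => edot (g i t - g i ts) (t - ts)).
by rewrite card_ord; apply => // i _; exact: grad_dissipative.
Qed.

End GradientBounds.

Lemma lyapunov_drift_arith (R : realFieldType) (r s t eta m K K1 K2 D g G : R) :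
  0 <= r -> 0 <= s -> 0 <= t -> t <= r + s -> 0 < eta -> 0 < K1 -> 0 <= D * K2 ->
  m * r ^+ 2 - K <= g -> 0 <= G -> G <= K1 * r ->
  eta < m / (K1 ^+ 2 + 64 * D ^+ 2 * K2 ^+ 2) ->
  1 + r ^+ 2 - 2 * eta * g + eta ^+ 2 * (G ^+ 2 + (2 * D * K2 * (2 * t + 1)) ^+ 2)
  <= (1 - m * eta) * (1 + r ^+ 2) + 2 * m * eta - eta ^+ 2 * K1 ^+ 2
     - 56 * eta ^+ 2 * D ^+ 2 * K2 ^+ 2
     + 64 * eta ^+ 2 * D ^+ 2 * K2 ^+ 2 * s ^+ 2 + 2 * eta * K.
Proof.
move=> r_ge0 s_ge0 t_ge0 t_le eta_gt0 K1_gt0 DK2_ge0 g_ge G_ge0 G_le eta_lt.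
set E := D ^+ 2 * K2 ^+ 2.
have E_ge0 : 0 <= E by rewrite mulr_ge0 ?sqr_ge0.
have rs_le : (2 * t + 1) ^+ 2 <= 2 * (8 * r ^+ 2 + 8 * s ^+ 2 + 1).
  apply: le_trans (_ : (2 * (r + s) + 1) ^+ 2 <= _).
    by apply: lerXn2r; rewrite ?nnegrE; lra.
  have : 0 <= (4 * r - 1) ^+ 2 + (4 * s - 1) ^+ 2 + 8 * (r - s) ^+ 2.
    by rewrite !addr_ge0 ?sqr_ge0 // mulr_ge0 // sqr_ge0.
  have -> : (4 * r - 1) ^+ 2 + (4 * s - 1) ^+ 2 + 8 * (r - s) ^+ 2
            = 2 * (2 * (8 * r ^+ 2 + 8 * s ^+ 2 + 1) - (2 * (r + s) + 1) ^+ 2) by ring.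
  lra.
have C2_le : (2 * D * K2 * (2 * t + 1)) ^+ 2 <= 8 * E * (8 * r ^+ 2 + 8 * s ^+ 2 + 1).
  have -> : (2 * D * K2 * (2 * t + 1)) ^+ 2 = 4 * E * (2 * t + 1) ^+ 2 by rewrite /E; ring.
  by have := ler_wpM2l E_ge0 rs_le; lra.
have G2_le : G ^+ 2 <= K1 ^+ 2 * r ^+ 2.
  by rewrite -exprMn; apply: lerXn2r G_ge0 (mulr_ge0 (ltW K1_gt0) r_ge0) G_le.
(* Inserting the bounds above, RHS - LHS is at least this slack. *)
have slack : 0 <= (m * eta - eta ^+ 2 * (K1 ^+ 2 + 64 * E)) * (1 + r ^+ 2).
  apply: mulr_ge0; last by rewrite addr_ge0 ?sqr_ge0.
  have den_gt0 : 0 < K1 ^+ 2 + 64 * E by have := exprn_gt0 2 K1_gt0; lra.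
  rewrite subr_ge0 expr2 -mulrA [m * _]mulrC ler_wpM2l ?ltW //.
  by rewrite -ltr_pdivlMr // /E mulrA.
have := ler_wpM2l (sqr_ge0 eta) C2_le.
have := ler_wpM2l (sqr_ge0 eta) G2_le.
have := ler_wpM2l (ltW eta_gt0) g_ge.
move: slack; rewrite /E; nra.
Qed.

Unset Implicit Arguments.
Set Strict Implicit.

Theorem lemmaD3 (R : realType) (d p : nat)
  (X : set 'rV[R]_p) (D : R)
  (f : 'rV[R]_d -> 'rV[R]_p -> R)
  (K1 K2 m K : R)
  (dT : measure_display) (T : measurableType dT) (P : probability T R)
  (xi : T -> 'rV[R]_d) (dens : 'rV[R]_d -> R)
  (n b : nat) (xh : 'I_n -> 'rV[R]_p)
  (thstar : 'rV[R]_d) (eta : R) :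
  (* f differentiable in theta *)
  (forall (x : 'rV[R]_p) (t : 'rV[R]_d), differentiable (fun s => f s x) t) ->
  (* X bounded by D *)
  (forall x, X x -> enorm x <= D) ->
  (* (A1) *)
  0 < K1 -> 0 < K2 ->
  (forall (t th : 'rV[R]_d) (x xx : 'rV[R]_p), X x -> X xx ->
     enorm (grad (fun s => f s x) t - grad (fun s => f s xx) th)
     <= K1 * enorm (t - th) + K2 * enorm (x - xx) * (enorm t + enorm th + 1)) ->
  (* (A3) *)
  0 < m -> 0 < K ->
  (forall (t1 t2 : 'rV[R]_d) (x : 'rV[R]_p), X x ->
     m * enorm (t1 - t2) ^+ 2 - K
     <= edot (grad (fun s => f s x) t1 - grad (fun s => f s x) t2) (t1 - t2)) ->
  (* (N) for xi = xi_1: measurable, continuous everywhere-positive density,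
     mean zero, finite second moment *)
  (forall i : 'I_d, measurable_fun setT (fun w => xi w ord0 i)) ->
  continuous dens -> (forall v, 0 < dens v) ->
  has_density P xi dens ->
  (forall i : 'I_d, P.-integrable setT (fun w => (xi w ord0 i)%:E)) ->
  (forall i : 'I_d, (\int[P]_w (xi w ord0 i)%:E = 0)%E) ->
  P.-integrable setT (fun w => (enorm (xi w) ^+ 2)%:E) ->
  (* data and minibatch size *)
  (forall i, X (xh i)) ->
  (1 <= b <= n)%N ->
  (* thstar minimizes the empirical risk *)
  (forall t, (n%:R)^-1 * \sum_(i < n) f thstar (xh i)
             <= (n%:R)^-1 * \sum_(i < n) f t (xh i)) ->
  (* step size *)
  0 < eta -> eta < m^-1 -> eta < m / (K1 ^+ 2 + 64 * D ^+ 2 * K2 ^+ 2) ->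
  forall theta : 'rV[R]_d,
    let V := fun t : 'rV[R]_d => 1 + enorm (t - thstar) ^+ 2 in
    let sigma2 := fine (\int[P]_w (enorm (xi w) ^+ 2)%:E)%E in
    (kernel_apply P f xh b eta xi V theta
     <= ((1 - m * eta) * V theta + 2 * m * eta - eta ^+ 2 * K1 ^+ 2
         - 56 * eta ^+ 2 * D ^+ 2 * K2 ^+ 2
         + 64 * eta ^+ 2 * D ^+ 2 * K2 ^+ 2 * enorm thstar ^+ 2
         + 2 * eta * K + eta ^+ 2 * sigma2)%:E)%E.
Proof.
move=> f_diff X_bdd K1_gt0 K2_gt0 A1 _ _ A3 _ _ _ _ xi_int xi_mean xi2_int xh_in
  b_range th_min eta_gt0 _ eta_lt theta; cbv zeta.
have /andP[b_gt0 b_le_n] := b_range; have n_gt0 := leq_trans b_gt0 b_le_n.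
rewrite kernel_apply_sqr_dist // lee_fin.
pose g i := grad (fun s => f s (xh i)) theta.
have g_spread i j : enorm (g i - g j) <= 2 * D * K2 * (2 * enorm theta + 1).
  exact: (grad_spread_le xh_in X_bdd (ltW K2_gt0) A1 theta i j).
apply: le_trans (lerD (lexx _) (batch_mean_sqr_enorm_step_le _ eta b_range g_spread)) _.
have grad_ts : \sum_i grad (fun s => f s (xh i)) thstar = 0.
  apply: grad_sum_eq0_at_min => // t; have := th_min t.
  by rewrite ler_pM2l // invr_gt0 ltr0n.
have D_ge0 : 0 <= D := le_trans (enorm_ge0 _) (X_bdd _ (xh_in (Ordinal n_gt0))).
have theta_le : enorm theta <= enorm (theta - thstar) + enorm thstar.
  by rewrite -{1}(subrK thstar theta) enormD.
have := lyapunov_drift_arith (enorm_ge0 _) (enorm_ge0 _) (enorm_ge0 _) theta_le eta_gt0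
  K1_gt0 (mulr_ge0 D_ge0 (ltW K2_gt0)) (full_grad_dissipative xh_in A3 n_gt0 grad_ts theta)
  (enorm_ge0 _) (enorm_full_grad_le xh_in A1 n_gt0 grad_ts theta) eta_lt.
rewrite -[n%:R^-1 *: \sum_i g i]/(full_grad f xh theta); lra.
Qed.
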